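(* For every dimension $d\geq 2$ and every $0<p<1/2$, every branching point of every solution to the Gilbert--Steiner problem in $\mathbb{R}^d$ with cost $c(x)=x^p$ has degree three (only triple branching occurs).
   Context: Let $\mu^+,\mu^-$ be finite measures on $\mathbb{R}^d$ with finite supports and equal total mass. A $(\mu^+,\mu^-)$-flow consists of a finite vertex set $V\subset\mathbb{R}^d$ containing the support of $\mu^+-\mu^-$, a finite set $E$ of unordered pairs $\{x,y\}\subset V$, and non-zero reals $m(x,y)=-m(y,x)$ on edges such that $\mu^+-\mu^-=\sum_{\{x,y\}\in E} m(x,y)(\delta_y-\delta_x)$. The Gilbert functional is $\sum_{\{x,y\}\in E}|m(x,y)|^p\,|x-y|$; a solution of the Gilbert--Steiner problem is a flow minimizing it. Branching points are vertices not in $\operatorname{supp}\mu^+\cup\operatorname{supp}\mu^-$; branching points of degree 2 are understood to be eliminated by merging their two edges. *)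

From HB Require Import structures.
From mathcomp Require Import all_boot all_order all_algebra.
From mathcomp Require Import reals exp.
Set Implicit Arguments. Unset Strict Implicit. Unset Printing Implicit Defensive.
Import Order.TTheory GRing.Theory Num.Theory.
Local Open Scope ring_scope.

Notation point R d := 'rV[R]_d.

Definition edist (R : realType) (d : nat) (x y : point R d) : R :=
  Num.sqrt (\sum_(i < d) (x ord0 i - y ord0 i) ^+ 2).

(* A finite (nonnegative) measure on R^d whose support is contained in the
   finite list S, represented by its weights mu x = mu({x}). *)
Definition fin_measure_on (R : realType) (d : nat) (S : seq (point R d))
  (mu : point R d -> R) : Prop :=
  (forall x, 0 <= mu x) /\ (forall x, mu x != 0 -> x \in S).

(* A flow: a finite vertex set V and antisymmetric edge weights m; the edge
   set E is exactly the set of unordered pairs {x,y} with m x y != 0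
   (the paper requires m nonzero on edges, and m(x,x) = 0 by antisymmetry). *)
Record flow (R : realType) (d : nat) := Flow {
  fV : seq (point R d);
  fm : point R d -> point R d -> R }.

(* (mu+,mu-)-flow: V contains supp(mu+ - mu-), edges lie in V, m antisymmetric,
   and mu+ - mu- = sum_{{x,y} in E} m(x,y)(delta_y - delta_x), evaluated
   pointwise at every z: (mu+ - mu-)(z) = sum_{w in V} m(w,z). *)
Definition is_flow (R : realType) (d : nat) (mup mum : point R d -> R)
  (F : flow R d) : Prop :=
  [/\ uniq (fV F),
      (forall x, mup x - mum x != 0 -> x \in fV F),
      (forall x y, fm F x y = - fm F y x),
      (forall x y, fm F x y != 0 -> (x \in fV F) && (y \in fV F)) &
      (forall z, mup z - mum z = \sum_(w <- fV F) fm F w z)].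

(* Gilbert cost sum_{{x,y} in E} |m(x,y)|^p |x-y|; each unordered edge is
   counted twice in the double sum, hence the factor 1/2.  Terms with
   m x y = 0 vanish since p > 0. *)
Definition gilbert_cost (R : realType) (d : nat) (p : R) (F : flow R d) : R :=
  2^-1 * \sum_(x <- fV F) \sum_(y <- fV F) (powR `|fm F x y| p * edist x y).

Definition gilbert_steiner_solution (R : realType) (d : nat) (p : R)
  (mup mum : point R d -> R) (F : flow R d) : Prop :=
  is_flow mup mum F /\
  forall G : flow R d, is_flow mup mum G -> gilbert_cost p F <= gilbert_cost p G.

Definition vdeg (R : realType) (d : nat) (F : flow R d) (z : point R d) : nat :=
  count (fun w => fm F z w != 0) (fV F).

Definition branching_point (R : realType) (d : nat) (mup mum : point R d -> R)
  (F : flow R d) (z : point R d) : Prop :=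
  z \in fV F /\ mup z = 0 /\ mum z = 0.

(* Let [z] be a branching point of an optimal flow, [f y] the flux from [z] to a neighbour
   [y], and [u y = |f y|^p (y - z) / |y - z|].  Detaching the edges [zy], [y] in [J], onto a
   new vertex [z + e v] joined to [z], with [v] a unit vector, changes the cost by
   [e (|sum_J f|^p - <sum_J u, v>) + O(e^2)], so optimality gives [|sum_J u| <= |sum_J f|^p]
   for every set [J] of neighbours: [sum u = 0] over all neighbours (Kirchhoff's law at [z])
   and [|u y + u y'|^2 <= |f y + f y'|^(2p)] for pairs.
   For [q = 2p < 1] the Gram matrix of the [u y] then forbids four or more neighbours.  If a
   single flux has sign opposite to the others, the pair bounds add up to
   [(sum |f|)^q <= sum |f|^q + sum_pairs ((|f| + |f'|)^q - |f|^q - |f'|^q)], contradicting a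
   strict Hlawka-type inequality for [t^q]; if two fluxes are opposite to a flux of minimal
   modulus, the pair bounds at that flux contradict the strict subadditivity of [t^q].
   Kirchhoff's law also excludes degree one. *)

From HB Require Import structures.
From mathcomp Require Import all_boot all_order all_algebra.
From mathcomp Require Import functions reals normedtype derive realfun exp.
From mathcomp Require Import ring lra.
Set Implicit Arguments. Unset Strict Implicit. Unset Printing Implicit Defensive.
Import Order.TTheory GRing.Theory Num.Theory.
Import numFieldNormedType.Exports.
Local Open Scope ring_scope.

Section SeqFacts.
Variables (R : realType) (T : eqType).
Implicit Types (V J : seq T) (g : T -> R).

Lemma seq_argmin (b : T -> R) (N : seq T) : N != [::] ->
  exists2 i, i \in N & {in N, forall y, b i <= b y}.
Proof.
elim: N => [//|x N IH] _; have [->|/IH[i iN imin]] := eqVneq N [::].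
  by exists x; rewrite ?mem_head// => y; rewrite inE => /eqP->.
have [bxi|bix] := lerP (b x) (b i).
  exists x; rewrite ?mem_head// => y; rewrite inE => /predU1P[->//|/imin].
  exact: le_trans.
exists i; first by rewrite inE iN orbT.
by move=> y; rewrite inE => /predU1P[->|/imin//]; apply: ltW.
Qed.

Lemma ler_sum_seq2 (F : T -> R) (s : seq T) a b : uniq s ->
  {in s, forall y, 0 <= F y} -> a \in s -> b \in s -> a != b ->
  F a + F b <= \sum_(y <- s) F y.
Proof.
move=> us F0 ains bins ab; rewrite (big_rem a ains) lerD2l.
have bra : b \in rem a s by rewrite mem_rem_uniq// inE eq_sym ab.
rewrite (big_rem b bra) lerDl big_seq sumr_ge0// => y /mem_rem /mem_rem.
exact: F0.
Qed.

Lemma big_seq_if_eq V z g : uniq V -> z \in V ->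
  \sum_(x <- V) (if x == z then g x else 0) = g z.
Proof.
by move=> uV zV; rewrite (bigD1_seq z)//= eqxx big1 ?addr0// => x /negbTE->.
Qed.

Lemma big_seq_if_in V J g : uniq V -> uniq J -> {subset J <= V} ->
  \sum_(x <- V) (if x \in J then g x else 0) = \sum_(x <- J) g x.
Proof.
move=> uV uJ JV; rewrite -big_mkcond -big_filter; apply/perm_big/uniq_perm => //.
  exact: filter_uniq.
by move=> x; rewrite mem_filter andb_idr//; apply: JV.
Qed.

Lemma exists_pos_notin (L : seq R) :
  exists2 m, 0 < m & forall t, 0 < t -> t < m -> t \notin L.
Proof.
elim: L => [|x L [m m0 mL]]; first by exists 1.
have [x0|x0] := ltrP 0 x; last first.
  exists m => // t t0 tm; rewrite inE negb_or mL// andbT.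
  by apply: contraTneq t0 => ->; rewrite -leNgt.
exists (Num.min x m); first by rewrite lt_min x0.
by move=> t t0; rewrite lt_min => /andP[tx tm]; rewrite inE negb_or mL// (lt_eqF tx).
Qed.

End SeqFacts.

Section PowerInequalities.
Variable R : realType.
Implicit Types q r a b c t x y z : R.

Lemma ler_powRl r a b : 0 <= r -> 0 <= a -> a <= b -> a `^ r <= b `^ r.
Proof. by move=> r0 a0 ab; rewrite ge0_ler_powR ?nnegrE// (le_trans a0). Qed.

Lemma ltr_powRl r a b : 0 < r -> 0 <= a -> a < b -> a `^ r < b `^ r.
Proof. by move=> r0 a0 ab; rewrite gt0_ltr_powR ?nnegrE// ltW// (le_lt_trans a0). Qed.

Lemma gtr_powRl r a b : r < 0 -> 0 < a -> a < b -> b `^ r < a `^ r.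
Proof.
move=> r0 a0 ab; have b0 : 0 < b := lt_trans a0 ab.
have /ltr_powRl/(_ (ltW a0) ab) : 0 < - r by rewrite oppr_gt0.
by rewrite !powRN ltf_pV2 ?posrE ?powR_gt0.
Qed.

Lemma powRD_le q a b : 0 < q -> q <= 1 -> 0 <= a -> 0 <= b ->
  (a + b) `^ q <= a `^ q + b `^ q.
Proof.
move=> q0 q1 a0 b0; have [->|ab0] := eqVneq (a + b) 0.
  by rewrite powR0 ?gt_eqF// addr_ge0 ?powR_ge0.
have s0 : 0 < a + b by rewrite lt_def ab0 addr_ge0.
(* [w <= w ^ q] for [w = u / (a + b)] in [[0, 1]]. *)
have chord u : 0 <= u -> u <= a + b -> (a + b) `^ q * (u / (a + b)) <= u `^ q.
  move=> u0 us; have uab_ge0 := divr_ge0 u0 (ltW s0).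
  rewrite -{2}(divfK (lt0r_neq0 s0) u) mulrC (powRM _ uab_ge0 (ltW s0)).
  rewrite ler_pM2r ?powR_gt0//; have [->|un0] := eqVneq u 0; first by rewrite mul0r powR_ge0.
  apply: ger1_powR q1; rewrite ler_pdivrMr// mul1r us andbT.
  by rewrite divr_gt0// lt_def un0.
apply: le_trans (lerD (chord a a0 _) (chord b b0 _)); last 2 first.
- by rewrite lerDl.
- by rewrite lerDr.
by rewrite -mulrDr -mulrDl divff ?mulr1.
Qed.

Lemma is_derive_powR_shift q c t : 0 < t + c ->
  is_derive t 1 (fun s => (s + c) `^ q) (q * (t + c) `^ (q - 1)).
Proof.
move=> tc; have := @is_derive1_comp R (fun s => s `^ q) (shift c) t _ 1
  (is_derive1_powR q tc) (is_derive_shift t 1 c).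
by rewrite mulr1.
Qed.

Lemma gtr0_is_derive_ltr (f df : R -> R) a b : a < b ->
  (forall t, a <= t <= b -> is_derive t 1 f (df t)) ->
  (forall t, a < t < b -> 0 < df t) -> f a < f b.
Proof.
move=> ab fdf df0; rewrite -subr_gt0.
have [c + ->] : exists2 c, c \in `]a, b[ & f b - f a = df c * (b - a).
  apply: MVT => // [t|].
    by rewrite in_itv => /andP[/ltW ta /ltW tb]; apply: fdf; rewrite ta tb.
  apply: derivable_within_continuous => t; rewrite in_itv => abt.
  by have [] := fdf t abt.
by rewrite in_itv => abc; rewrite mulr_gt0 ?subr_gt0// df0.
Qed.

Lemma gtr_powR_gap r x a b : r < 0 -> 0 < x -> 0 < a -> a < b ->
  b `^ r - (b + x) `^ r < a `^ r - (a + x) `^ r.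
Proof.
move=> r0 x0 a0 ab.
suff : (a + x) `^ r - a `^ r < (b + x) `^ r - b `^ r by lra.
apply: (gtr0_is_derive_ltr (f := (fun t => (t + x) `^ r) - (fun t => t `^ r))
  (df := fun t => r * (t + x) `^ (r - 1) - r * t `^ (r - 1))) => // t /andP[ta _].
  have t0 : 0 < t := lt_le_trans a0 ta.
  apply: is_deriveB; last exact: is_derive1_powR.
  by apply: is_derive_powR_shift; rewrite addr_gt0.
have t0 : 0 < t := lt_trans a0 ta.
rewrite -mulrBr nmulr_rgt0// subr_lt0.
by apply: gtr_powRl; rewrite ?ltrDl// subr_lt0 (lt_trans r0).
Qed.

Definition powR_diff2 q x y t :=
  t `^ q + (t + (x + y)) `^ q - (t + x) `^ q - (t + y) `^ q.

Lemma powR_diff2_incr q x y a b : 0 < q -> q < 1 -> 0 < x -> 0 < y ->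
  0 < a -> a < b -> powR_diff2 q x y a < powR_diff2 q x y b.
Proof.
move=> q0 q1 x0 y0 a0 ab.
have -> : powR_diff2 q x y = (fun t => t `^ q) + (fun t => (t + (x + y)) `^ q)
    - (fun t => (t + x) `^ q) - (fun t => (t + y) `^ q) by [].
apply: (gtr0_is_derive_ltr (df := fun t => q * t `^ (q - 1) + q * (t + (x + y)) `^ (q - 1)
  - q * (t + x) `^ (q - 1) - q * (t + y) `^ (q - 1))) => // t /andP[ta _].
  have t0 : 0 < t := lt_le_trans a0 ta.
  apply: is_deriveB; [apply: is_deriveB; [apply: is_deriveD|]|];
    by [exact: is_derive1_powR | apply: is_derive_powR_shift; rewrite !addr_gt0].
have t0 : 0 < t := lt_trans a0 ta.
have q1' : q - 1 < 0 by rewrite subr_lt0.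
have tty : t < t + y by rewrite ltrDl.
have := gtr_powR_gap q1' x0 t0 tty; rewrite -addrA (addrC y) -subr_gt0 -(pmulr_rgt0 _ q0).
lra.
Qed.

(* A quantitative substitute for the right continuity of [g] at [0]. *)
Lemma ltr0_incr_powR_lbound q (g : R -> R) b : 0 < q -> 0 < b ->
  (forall s t, 0 < s -> s < t -> g s < g t) ->
  (forall t, 0 < t -> g 0 - t `^ q <= g t) -> g 0 < g b.
Proof.
move=> q0 b0 incr lbound.
have b2_gt0 : 0 < b / 2 by rewrite divr_gt0.
set del := g b - g (b / 2).
have del_gt0 : 0 < del by rewrite subr_gt0 incr// ltr_pdivrMr// ltr_pMr// ltr1n.
pose t := Num.min (b / 4) ((del / 2) `^ q^-1).
have t_gt0 : 0 < t by rewrite lt_min divr_gt0//= powR_gt0// divr_gt0.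
have tb : t < b / 2.
  by rewrite gt_min ltr_pM2l// ?ltf_pV2 ?posrE ?ltr_nat.
have tq : t `^ q <= del / 2.
  have t_le : t <= (del / 2) `^ q^-1 by rewrite ge_min lexx orbT.
  apply: le_trans (ler_powRl (ltW q0) (ltW t_gt0) t_le) _.
  by rewrite -powRrM mulVf ?gt_eqF// powRr1// ltW// divr_gt0.
have := lbound t t_gt0; have := incr t (b / 2) t_gt0 tb; rewrite /del in del_gt0 tq; lra.
Qed.

Lemma powR_hlawka q x y z : 0 < q -> q < 1 -> 0 < x -> 0 < y -> 0 < z ->
  (x + y) `^ q + (x + z) `^ q + (y + z) `^ q <
  x `^ q + y `^ q + z `^ q + (x + y + z) `^ q.
Proof.
move=> q0 q1 x0 y0 z0.
have diff2_0 : powR_diff2 q x y 0 = (x + y) `^ q - x `^ q - y `^ q.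
  by rewrite /powR_diff2 powR0 ?gt_eqF// !add0r.
suff : powR_diff2 q x y 0 < powR_diff2 q x y z.
  by rewrite diff2_0 /powR_diff2 (addrC z (x + y)) (addrC z x) (addrC z y); lra.
apply: (ltr0_incr_powR_lbound q0 z0) => [s t s0 st|t t0].
  exact: powR_diff2_incr.
rewrite diff2_0 /powR_diff2.
have := powRD_le q0 (ltW q1) (ltW t0) (ltW x0).
have := powRD_le q0 (ltW q1) (ltW t0) (ltW y0).
have : (x + y) `^ q <= (t + (x + y)) `^ q.
  by apply: ler_powRl; rewrite ?lerDr ltW ?addr_gt0.
lra.
Qed.

Lemma powR_sqr r a : 0 <= a -> (a `^ r) ^+ 2 = a `^ (r * 2).
Proof. by move=> a0; rewrite powRrM powR_mulrn// powR_ge0. Qed.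

Lemma ltr_normD_opposite (a c : R) : a * c < 0 -> `|a| <= `|c| -> `|a + c| < `|c|.
Proof.
move=> ac a_le; rewrite ltr_norml; have [c0|c0] := ltrP 0 c.
  have a0 : a < 0 by rewrite -(pmulr_llt0 _ c0).
  by move: a_le; rewrite ltr0_norm// gtr0_norm// => ?; apply/andP; split; lra.
have c_lt0 : c < 0.
  by rewrite lt_neqAle c0 andbT; apply: contraTneq ac => ->; rewrite mulr0 ltxx.
have a0 : 0 < a by rewrite -(nmulr_llt0 _ c_lt0).
by move: a_le; rewrite gtr0_norm// ltr0_norm// => ?; apply/andP; split; lra.
Qed.

End PowerInequalities.

Section PowerExcess.
Variables (R : realType) (q : R).
Hypotheses (q_gt0 : 0 < q) (q_lt1 : q < 1).
Implicit Types (x y t : R) (s : seq R).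

Definition cross x y := (x + y) `^ q - x `^ q - y `^ q.

Fixpoint sum_cross s :=
  if s is x :: s' then \sum_(y <- s') cross x y + sum_cross s' else 0.

Definition excess s := (\sum_(x <- s) x) `^ q - \sum_(x <- s) x `^ q - sum_cross s.

Lemma excess_small s : (size s <= 1)%N -> excess s = 0.
Proof.
case: s => [|x [|//]] _; rewrite /excess /= ?big_nil ?big_seq1 ?addr0.
  by rewrite powR0 ?gt_eqF// !subr0.
by rewrite !subrr.
Qed.

Lemma excess_merge x y s : excess [:: x, y & s] =
  excess (x + y :: s) + \sum_(t <- s) (cross (x + y) t - cross x t - cross y t).
Proof. by rewrite /excess /= !big_cons !sumrB !addrA /cross; ring. Qed.

Lemma cross_merge_gt0 x y t : 0 < x -> 0 < y -> 0 < t ->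
  0 < cross (x + y) t - cross x t - cross y t.
Proof. by move=> x0 y0 t0; have := powR_hlawka q_gt0 q_lt1 x0 y0 t0; rewrite /cross; lra. Qed.

Lemma sum_cross_merge_ge0 x y s : 0 < x -> 0 < y -> all (> 0) s ->
  0 <= \sum_(t <- s) (cross (x + y) t - cross x t - cross y t).
Proof.
move=> x0 y0 /allP s0; rewrite big_seq sumr_ge0// => t /s0 t0.
exact/ltW/cross_merge_gt0.
Qed.

Lemma excess_ge0 s : all (> 0) s -> 0 <= excess s.
Proof.
case: s => [|x [|y s]]; try by rewrite excess_small.
move=> /and3P[+ +].
elim: s x y => [|t s IH] x y x0 y0 s0.
  by rewrite excess_merge big_nil addr0 excess_small.
rewrite excess_merge addr_ge0 ?sum_cross_merge_ge0//.
by case/andP: s0 => t0 s0; rewrite IH// addr_gt0.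
Qed.

Lemma excess_gt0 s : all (> 0) s -> (3 <= size s)%N -> 0 < excess s.
Proof.
case: s => [|x [|y [|t s]]] //= /and4P[x0 y0 t0 s0] _.
have : all (> 0) [:: x + y, t & s] by rewrite /= addr_gt0// t0 s0.
move/excess_ge0.
have := sum_cross_merge_ge0 x0 y0 s0; have := cross_merge_gt0 x0 y0 t0.
by rewrite excess_merge big_cons; lra.
Qed.

End PowerExcess.

Section BalancedConfigurations.
Variables (R : realType) (q : R) (T : eqType).
Implicit Types (N : seq T) (f : T -> R) (G : T -> T -> R).

Lemma double_sum_le_cross G (b : T -> R) (P : seq T) :
  uniq P -> (forall y y', G y y' = G y' y) ->
  {in P, forall y, G y y = b y `^ q} ->
  {in P &, forall y y', y != y' -> 2 * G y y' <= cross q (b y) (b y')} ->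
  \sum_(y <- P) \sum_(y' <- P) G y y' <= \sum_(y <- P) b y `^ q + sum_cross q (map b P).
Proof.
elim: P => [|x P IH] /=; first by rewrite !big_nil addr0.
move=> /andP[xP uP] Gsym Gdiag Gpair.
have sub : {subset P <= x :: P} by move=> y yP; rewrite inE yP orbT.
have IHP := IH uP Gsym (sub_in1 sub Gdiag) (sub_in2 sub Gpair).
have row_x : 2 * \sum_(y <- P) G x y <= \sum_(y <- P) cross q (b x) (b y).
  rewrite mulr_sumr !big_seq ler_sum// => y yP; apply: Gpair; rewrite ?mem_head ?sub//.
  by apply: contraNneq xP => ->.
have rows_P : \sum_(y <- P) \sum_(y' <- x :: P) G y y' =
    \sum_(y <- P) G x y + \sum_(y <- P) \sum_(y' <- P) G y y'.
  by rewrite -big_split; apply: eq_bigr => y _; rewrite big_cons Gsym.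
rewrite big_cons rows_P !big_cons big_map Gdiag ?mem_head//=; lra.
Qed.

(* The Gram matrix [G y y' = <u y, u y'>] of the pulls [u y] of the edges [zy] at a branching
   point [z] of an optimal flow, with fluxes [f y]; see [optimal_branching_balanced]. *)
Record balanced N f G : Prop := Balanced {
  balanced_uniq : uniq N;
  balanced_neq0 : {in N, forall y, f y != 0};
  balanced_sum : \sum_(y <- N) f y = 0;
  balanced_sym : forall y y', G y y' = G y' y;
  balanced_row : {in N, forall y, \sum_(y' <- N) G y y' = 0};
  balanced_diag : {in N, forall y, G y y = `|f y| `^ q};
  balanced_pair : {in N &, forall y y', y != y' ->
    G y y + G y' y' + 2 * G y y' <= `|f y + f y'| `^ q} }.

Lemma balancedN N f G : balanced N f G -> balanced N (fun y => - f y) G.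
Proof.
case=> uN f0 fsum Gsym Grow Gdiag Gpair; split=> // [y yN|||y y' yN y'N yy'].
- by rewrite oppr_eq0 f0.
- by rewrite sumrN fsum oppr0.
- by move=> y yN; rewrite normrN Gdiag.
- by rewrite -opprD normrN Gpair.
Qed.

Lemma balanced_size_neq1 N f G : balanced N f G -> size N != 1%N.
Proof.
case=> _ f0 fsum _ _ _ _; apply/negP; case: N f0 fsum => [|y [|]] //= f0.
by rewrite big_seq1 => fy0; move: (f0 y); rewrite mem_head fy0 eqxx => /(_ isT).
Qed.

Lemma balanced_one_negative N f G n : 0 < q -> q < 1 -> balanced N f G ->
  n \in N -> {in N, forall y, y != n -> 0 < f y} -> (size N <= 3)%N.
Proof.
move=> q0 q1 [uN f0 fsum Gsym Grow Gdiag Gpair] nN fpos.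
rewrite leqNgt; apply/negP => N4.
set P := rem n N.
have memP y : y \in P = (y != n) && (y \in N) by rewrite mem_rem_uniq.
have sumN (F : T -> R) : \sum_(y <- N) F y = F n + \sum_(y <- P) F y by rewrite (big_rem n nN).
have fP y : y \in P -> 0 < f y by rewrite memP => /andP[yn /fpos]; apply.
have PN : {subset P <= N} by move=> y; rewrite memP => /andP[].
have norm_fn : `|f n| = \sum_(y <- P) `|f y|.
  have -> : f n = - \sum_(y <- P) f y by apply/eqP; rewrite -addr_eq0 -sumN fsum.
  rewrite normrN ger0_norm; last by rewrite big_seq sumr_ge0// => y /fP/ltW.
  by rewrite !big_seq; apply: eq_bigr => y /fP/gtr0_norm.
(* The rows of [G] through [n] and through [P] give [G n n] as the total of [G] over [P]. *)
have Gnn : G n n = \sum_(y <- P) \sum_(y' <- P) G y y'.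
  have := Grow n nN; rewrite sumN => /eqP; rewrite addr_eq0 => /eqP->.
  rewrite -sumrN big_seq [RHS]big_seq; apply: eq_bigr => y yP.
  by have := Grow y (PN y yP); rewrite sumN (Gsym y n); lra.
have pair : {in P &, forall y y', y != y' -> 2 * G y y' <= cross q `|f y| `|f y'|}.
  move=> y y' yP y'P yy'; have := Gpair y y' (PN y yP) (PN y' y'P) yy'.
  have [fy fy'] := (fP y yP, fP y' y'P).
  by rewrite !Gdiag ?PN// /cross (gtr0_norm fy) (gtr0_norm fy') gtr0_norm ?addr_gt0//; lra.
have Ppos : all (> 0) [seq `|f y| | y <- P].
  by apply/allP => _ /mapP[y /fP fy ->]; rewrite normr_gt0 gt_eqF.
have P3 : (3 <= size P)%N by rewrite size_rem//; case: size N4.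
have := excess_gt0 q0 q1 Ppos; rewrite size_map => /(_ P3).
have := double_sum_le_cross (rem_uniq n uN) Gsym (sub_in1 PN Gdiag) pair.
by rewrite -Gnn Gdiag// norm_fn /excess !big_map; lra.
Qed.

Lemma balanced_opposite_min N f G i : 0 < q -> q <= 1 -> balanced N f G ->
  i \in N -> {in N, forall y, `|f i| <= `|f y|} ->
  {in N &, forall y1 y2, f y1 * f i < 0 -> f y2 * f i < 0 -> y1 = y2}.
Proof.
move=> q0 q1 [uN f0 _ _ Grow Gdiag Gpair] iN imin y1 y2 y1N y2N opp1 opp2.
apply/eqP; apply: contraT => y12.
set B := `|f i| `^ q; have B0 : 0 < B by rewrite powR_gt0// normr_gt0 f0.
pose v y := `|f y| `^ q + B - `|f i + f y| `^ q.
have v_ge0 y : 0 <= v y.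
  rewrite subr_ge0 addrC (le_trans (ler_powRl (ltW q0) _ (ler_normD _ _)))//.
  exact: powRD_le.
have v_opp y : y \in N -> f y * f i < 0 -> B < v y.
  move=> yN opp; suff : `|f i + f y| `^ q < `|f y| `^ q by rewrite /v; lra.
  by apply: ltr_powRl => //; apply: ltr_normD_opposite; rewrite 1?mulrC ?imin.
have v_le y : y \in N -> y != i -> v y <= - 2 * G i y.
  move=> yN yi; have := Gpair i y iN yN; rewrite eq_sym yi Gdiag// Gdiag// -/B /v.
  by move=> /(_ isT); lra.
have not_i y : f y * f i < 0 -> y != i.
  by apply: contraTneq => ->; rewrite -expr2 ltNge sqr_ge0.
have row_i : \sum_(y <- rem i N) G i y = - B.
  by have := Grow i iN; rewrite (big_rem i iN) /= Gdiag// -/B; lra.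
have : \sum_(y <- rem i N) v y <= 2 * B.
  apply: le_trans (_ : \sum_(y <- rem i N) - 2 * G i y <= _); last first.
    by rewrite -mulr_sumr row_i; lra.
  rewrite !big_seq ler_sum// => y; rewrite mem_rem_uniq// inE => /andP[yi yN].
  exact: v_le.
have := @ler_sum_seq2 _ _ v (rem i N) y1 y2 (rem_uniq i uN) (fun y _ => v_ge0 y).
rewrite !mem_rem_uniq// !inE !not_i// y1N y2N => /(_ isT isT y12).
by have := v_opp y1 y1N opp1; have := v_opp y2 y2N opp2; lra.
Qed.

Theorem balanced_size_le3 N f G : 0 < q -> q < 1 -> balanced N f G -> (size N <= 3)%N.
Proof.
move=> q0 q1 bal; have [->//|N0] := eqVneq N [::].
have [i iN imin] := seq_argmin (fun y => `|f y|) N0.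
wlog fi : f bal imin / 0 < f i.
  move=> wlog_pos; have [|fi] := ltrP 0 (f i); first exact: wlog_pos.
  apply: (wlog_pos (fun y => - f y)); first exact: balancedN.
    by move=> y /imin; rewrite !normrN.
  by rewrite oppr_gt0 lt_neqAle fi andbT (balanced_neq0 bal).
have [uN f0 fsum _ _ _ _] := bal.
have memneg y : y \in [seq y <- N | f y < 0] = (f y < 0) && (y \in N) by rewrite mem_filter.
move: (filter_uniq (fun y => f y < 0) uN) memneg.
case: [seq y <- N | f y < 0] => [|n [|n' neg]] uneg memneg.
- have f_ge0 y : y \in N -> 0 <= f y.
    by move=> yN; rewrite leNgt; apply/negP => fy; move: (memneg y); rewrite fy yN.
  suff : \sum_(y <- N) f y != 0 by rewrite fsum eqxx.
  by rewrite big_seq psumr_neq0//; apply/hasP; exists i; rewrite ?iN ?fi.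
- have /andP[fn nN] : (f n < 0) && (n \in N) by rewrite -memneg mem_head.
  apply: (balanced_one_negative q0 q1 bal nN) => y yN yn.
  rewrite lt_neqAle eq_sym f0// leNgt; apply/negP => fy.
  by move: (memneg y); rewrite fy yN inE (negbTE yn).
- have /andP[fn nN] : (f n < 0) && (n \in N) by rewrite -memneg mem_head.
  have /andP[fn' n'N] : (f n' < 0) && (n' \in N) by rewrite -memneg !inE eqxx orbT.
  have := balanced_opposite_min q0 (ltW q1) bal iN imin nN n'N.
  rewrite !pmulr_llt0// => /(_ fn fn') nn'; move: uneg; by rewrite nn' /= inE eqxx.
Qed.

End BalancedConfigurations.

Section EuclideanSpace.
Variables (R : realType) (d : nat).
Implicit Types (u v w x y : point R d) (e : R).

Definition dot u v : R := \sum_(i < d) u ord0 i * v ord0 i.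

Definition enorm u : R := Num.sqrt (dot u u).

Lemma dotC u v : dot u v = dot v u.
Proof. by apply: eq_bigr => i _; rewrite mulrC. Qed.

Lemma dotDl u v w : dot (u + v) w = dot u w + dot v w.
Proof. by rewrite /dot -big_split; apply: eq_bigr => i _; rewrite mxE mulrDl. Qed.

Lemma dotZl e u v : dot (e *: u) v = e * dot u v.
Proof. by rewrite /dot mulr_sumr; apply: eq_bigr => i _; rewrite mxE mulrA. Qed.

Lemma dotNl u v : dot (- u) v = - dot u v.
Proof. by rewrite -scaleN1r dotZl mulN1r. Qed.

Lemma dotBl u v w : dot (u - v) w = dot u w - dot v w.
Proof. by rewrite dotDl dotNl. Qed.

Lemma dotDr u v w : dot u (v + w) = dot u v + dot u w.
Proof. by rewrite dotC dotDl !(dotC u). Qed.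

Lemma dotBr u v w : dot u (v - w) = dot u v - dot u w.
Proof. by rewrite dotC dotBl !(dotC u). Qed.

Lemma dotZr e u v : dot u (e *: v) = e * dot u v.
Proof. by rewrite dotC dotZl dotC. Qed.

Lemma dot0l v : dot 0 v = 0.
Proof. by rewrite /dot big1// => i _; rewrite mxE mul0r. Qed.

Lemma dot_suml (I : Type) (r : seq I) (U : I -> point R d) v :
  dot (\sum_(i <- r) U i) v = \sum_(i <- r) dot (U i) v.
Proof.
elim: r => [|i r IH]; first by rewrite !big_nil dot0l.
by rewrite !big_cons dotDl IH.
Qed.

Lemma dotxx_ge0 u : 0 <= dot u u.
Proof. by rewrite sumr_ge0// => i _; rewrite -expr2 sqr_ge0. Qed.

Lemma dotxx_eq0 u : (dot u u == 0) = (u == 0).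
Proof.
apply/idP/eqP => [|->]; last by rewrite dot0l.
rewrite /dot psumr_eq0 => [/allP u0|i _]; last by rewrite -expr2 sqr_ge0.
apply/rowP => i; rewrite mxE; have := u0 i (mem_index_enum i).
by rewrite -expr2 sqrf_eq0 => /eqP.
Qed.

Lemma enorm_sqr u : enorm u ^+ 2 = dot u u.
Proof. by rewrite sqr_sqrtr// dotxx_ge0. Qed.

Lemma enormZ e u : enorm (e *: u) = `|e| * enorm u.
Proof. by rewrite /enorm dotZl dotZr mulrA -expr2 sqrtrM ?sqr_ge0// sqrtr_sqr. Qed.

Lemma edistE x y : edist x y = enorm (x - y).
Proof.
by congr Num.sqrt; apply: eq_bigr => i _; rewrite !mxE expr2.
Qed.

Lemma edistC x y : edist x y = edist y x.
Proof. by rewrite !edistE /enorm -opprB dotNl dotC dotNl opprK. Qed.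

Lemma edist_ge0 x y : 0 <= edist x y.
Proof. exact: sqrtr_ge0. Qed.

Lemma edist_gt0 x y : x != y -> 0 < edist x y.
Proof.
by move=> xy; rewrite edistE sqrtr_gt0 lt_def dotxx_eq0 subr_eq0 xy dotxx_ge0.
Qed.

Lemma sqrt_le_tangent (a h : R) : 0 < a -> 0 <= a ^+ 2 + h ->
  Num.sqrt (a ^+ 2 + h) <= a + h / (2 * a).
Proof.
move=> a0 ah0; have a0' : a != 0 by rewrite gt_eqF.
have tangent_ge0 : 0 <= a + h / (2 * a).
  have -> : a + h / (2 * a) = (a ^+ 2 + (a ^+ 2 + h)) / (2 * a) by field.
  by apply: divr_ge0; [rewrite addr_ge0 ?sqr_ge0 | lra].
rewrite -(ger0_norm tangent_ge0) -sqrtr_sqr ler_sqrt ?sqr_ge0//.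
have -> : (a + h / (2 * a)) ^+ 2 = a ^+ 2 + h + (h / (2 * a)) ^+ 2 by field.
by rewrite lerDl sqr_ge0.
Qed.

Lemma edist_shift_le x y v e : x != y ->
  edist (x + e *: v) y <=
  edist x y - e * dot (y - x) v / edist x y + e ^+ 2 * dot v v / (2 * edist x y).
Proof.
move=> xy; have A0 := edist_gt0 xy; set A := edist x y.
set h := e ^+ 2 * dot v v - 2 * e * dot (y - x) v.
have expand : edist (x + e *: v) y ^+ 2 = A ^+ 2 + h.
  rewrite /A /h !edistE !enorm_sqr !(dotBl, dotBr, dotZl, dotZr, dotDl, dotDr).
  by rewrite (dotC v x) (dotC v y) (dotC y x); ring.
have -> : A - e * dot (y - x) v / A + e ^+ 2 * dot v v / (2 * A) = A + h / (2 * A).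
  by rewrite /h; field; rewrite gt_eqF.
rewrite -[edist _ _]ger0_norm ?edist_ge0// -sqrtr_sqr expand.
by apply: sqrt_le_tangent; rewrite // -expand sqr_ge0.
Qed.

End EuclideanSpace.

Section FlowFacts.
Variables (R : realType) (d : nat) (mup mum : point R d -> R) (F : flow R d).
Hypothesis flowF : is_flow mup mum F.

Lemma flow_uniq : uniq (fV F).
Proof. by case: flowF. Qed.

Lemma flow_anti x y : fm F x y = - fm F y x.
Proof. by case: flowF. Qed.

Lemma flow_diag x : fm F x x = 0.
Proof. by have := flow_anti x x; lra. Qed.

Lemma flow_edge x y : fm F x y != 0 -> (x \in fV F) && (y \in fV F).
Proof. by case: flowF => _ _ _ + _; apply. Qed.

Lemma flow_support x : x \notin fV F -> mup x - mum x = 0.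
Proof. by case: flowF => _ + _ _ _ => /(_ x); apply: contraNeq. Qed.

Lemma flow_div x : mup x - mum x = \sum_(w <- fV F) fm F w x.
Proof. by case: flowF. Qed.

Definition edge_cost p x y := `|fm F x y| `^ p * edist x y.

Lemma gilbert_costE p :
  gilbert_cost p F = 2^-1 * \sum_(x <- fV F) \sum_(y <- fV F) edge_cost p x y.
Proof. by []. Qed.

Lemma edge_costC p x y : edge_cost p x y = edge_cost p y x.
Proof. by rewrite /edge_cost flow_anti normrN edistC. Qed.

End FlowFacts.

Section Rerouting.
Variables (R : realType) (d : nat) (F : flow R d) (z zp : point R d).
Variable J : seq (point R d).
Local Notation m := (fm F).
Local Notation mJ := (\sum_(w <- J) m z w).

(* The edges [zy], [y \in J], are moved to the new vertex [zp], which is joined to [z] by an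
   edge carrying their total flux. *)
Definition reroute_out y := if y == z then - mJ else if y \in J then m z y else 0.

Definition reroute_fm x y :=
  if x == zp then reroute_out y
  else if y == zp then - reroute_out x
  else if (x == z) && (y \in J) || (y == z) && (x \in J) then 0
  else m x y.

Definition reroute := Flow (zp :: fV F) reroute_fm.

Variables (mup mum : point R d -> R).
Hypotheses (flowF : is_flow mup mum F) (zV : z \in fV F) (zpV : zp \notin fV F).
Hypotheses (uJ : uniq J) (Jnbr : {in J, forall y, m z y != 0}).

Lemma reroute_JV : {subset J <= fV F}.
Proof. by move=> y /Jnbr /(flow_edge flowF) /andP[]. Qed.

Lemma reroute_zJ : z \notin J.
Proof. by apply/negP => /Jnbr; rewrite (flow_diag flowF) eqxx. Qed.

Lemma reroute_V_neq x : x \in fV F -> x != zp.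
Proof. by apply: contraTneq => ->. Qed.

Lemma reroute_outE y :
  reroute_out y = (if y == z then - mJ else 0) + (if y \in J then m z y else 0).
Proof.
rewrite /reroute_out; case: eqP => [->|_]; last by rewrite add0r.
by rewrite (negbTE reroute_zJ) addr0.
Qed.

Lemma reroute_out_zp : reroute_out zp = 0.
Proof.
rewrite /reroute_out eq_sym (negbTE (reroute_V_neq zV)).
by case: ifP => // /reroute_JV; rewrite (negbTE zpV).
Qed.

Lemma reroute_anti x y : reroute_fm x y = - reroute_fm y x.
Proof.
rewrite /reroute_fm; have [->|xzp] := eqVneq x zp.
  by have [->|_] := eqVneq y zp; rewrite ?reroute_out_zp ?oppr0 ?opprK.
have [//|yzp] := eqVneq y zp.
rewrite orbC; case: ((y == z) && (x \in J) || (x == z) && (y \in J)).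
  by rewrite oppr0.
exact: (flow_anti flowF x y).
Qed.

Lemma reroute_fmE x y : x != zp -> y != zp -> reroute_fm x y =
  m x y - (if (x == z) && (y \in J) then m x y else 0)
        - (if (y == z) && (x \in J) then m x y else 0).
Proof.
move=> /negbTE xzp /negbTE yzp; rewrite /reroute_fm xzp yzp.
have [->|_] := eqVneq x z; have [->|_] := eqVneq y z;
  rewrite /= ?(negbTE reroute_zJ) ?orbF ?subr0//; by case: ifP; rewrite ?subrr ?subr0.
Qed.

Lemma reroute_out_neq0 y : reroute_out y != 0 -> y \in fV F.
Proof.
rewrite /reroute_out; have [->//|_] := eqVneq y z.
by case: ifP => [/reroute_JV//|]; rewrite eqxx.
Qed.

Lemma reroute_sum_out : \sum_(x <- fV F) reroute_out x = 0.
Proof.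
rewrite (eq_bigr _ (fun x _ => reroute_outE x)) big_split /=.
by rewrite big_seq_if_eq ?big_seq_if_in ?(flow_uniq flowF) ?addNr//; apply: reroute_JV.
Qed.

Lemma reroute_sum_in w : w != zp ->
  \sum_(x <- fV F) reroute_fm x w = \sum_(x <- fV F) m x w - reroute_out w.
Proof.
move=> wzp; rewrite big_seq (eq_bigr _ (fun x xV => reroute_fmE (reroute_V_neq xV) wzp)).
rewrite -big_seq !sumrB reroute_outE.
have uV := flow_uniq flowF.
have [->|wz] := eqVneq w z; rewrite /=.
  rewrite (negbTE reroute_zJ) [X in _ - X - _]big1 => [|x]; last by rewrite andbF.
  rewrite big_seq_if_in//; last exact: reroute_JV.
  have -> : \sum_(x <- J) m x z = - mJ.
    by rewrite -sumrN; apply: eq_bigr => x _; exact: (flow_anti flowF).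
  by rewrite !subr0 addr0 opprK.
rewrite [X in _ - _ - X]big1// add0r; case: (w \in J).
  rewrite [X in _ - X - _](eq_bigr (fun x => if x == z then m x w else 0)) => [|x _].
    by rewrite big_seq_if_eq ?subr0.
  by rewrite andbT.
by rewrite [X in _ - X - _]big1 => [|x]; rewrite ?andbF ?subr0.
Qed.

Lemma reroute_is_flow : is_flow mup mum reroute.
Proof.
split=> /= [||||w]; first by rewrite zpV (flow_uniq flowF).
- move=> x nz; rewrite inE; apply/orP; right.
  by apply: contraNT nz => /(flow_support flowF)->; rewrite eqxx.
- exact: reroute_anti.
- move=> x y; rewrite /reroute_fm !inE.
  have [->|_] := eqVneq x zp; first by move/reroute_out_neq0->; rewrite orbT.
  have [->|_] := eqVneq y zp; first by rewrite oppr_eq0 => /reroute_out_neq0->.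
  by case: ifP => [|_ /(flow_edge flowF)/andP[-> ->]]; rewrite ?eqxx ?orbT.
rewrite big_cons {1}/reroute_fm eqxx; have [->|wzp] := eqVneq w zp.
  rewrite (flow_support flowF zpV) reroute_out_zp add0r big_seq.
  rewrite (eq_bigr (fun x => - reroute_out x)) -?big_seq ?sumrN ?reroute_sum_out ?oppr0//.
  by move=> x /reroute_V_neq /negbTE; rewrite /reroute_fm eqxx => ->.
by rewrite reroute_sum_in// (flow_div flowF) addrC subrK.
Qed.

Variable p : R.
Hypothesis p_gt0 : 0 < p.
Local Notation c := (edge_cost F p).
Local Notation c' := (edge_cost reroute p).

Lemma reroute_cost_out : \sum_(y <- fV F) c' zp y =
  `|mJ| `^ p * edist zp z + \sum_(y <- J) `|m z y| `^ p * edist zp y.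
Proof.
have uV := flow_uniq flowF.
rewrite -(big_seq_if_eq (fun y => `|mJ| `^ p * edist zp y) uV zV).
rewrite -(big_seq_if_in (fun y => `|m z y| `^ p * edist zp y) uV uJ reroute_JV).
rewrite -big_split; apply: eq_bigr => y _; rewrite /edge_cost /= /reroute_fm eqxx /reroute_out.
have [->|_] := eqVneq y z; first by rewrite (negbTE reroute_zJ) normrN addr0.
by case: ifP; rewrite ?add0r// normr0 powR0 ?gt_eqF// mul0r.
Qed.

Lemma reroute_edge_cost x y : x != zp -> y != zp -> c' x y =
  c x y - (if (x == z) && (y \in J) then c x y else 0)
        - (if (y == z) && (x \in J) then c x y else 0).
Proof.
move=> /negbTE xzp /negbTE yzp; rewrite /edge_cost /= /reroute_fm xzp yzp.
have zero a b : `|0| `^ p * edist a b = 0 by rewrite normr0 powR0 ?gt_eqF ?mul0r.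
have [->|_] := eqVneq x z; have [->|_] := eqVneq y z;
  rewrite /= ?(negbTE reroute_zJ) ?orbF ?subr0//; by case: ifP; rewrite ?zero ?subrr ?subr0.
Qed.

Lemma reroute_cost_row x : x \in fV F -> \sum_(y <- fV F) c' x y =
  \sum_(y <- fV F) c x y - (if x == z then \sum_(y <- J) c x y else 0)
  - (if x \in J then c x z else 0).
Proof.
move=> xV; have uV := flow_uniq flowF.
rewrite big_seq (eq_bigr _ (fun y yV =>
  reroute_edge_cost (reroute_V_neq xV) (reroute_V_neq yV))).
rewrite -big_seq !sumrB; congr (_ - _ - _).
  case: (x == z); last by rewrite big1.
  exact: (big_seq_if_in (c x) uV uJ reroute_JV).
case: (x \in J); last by rewrite big1// => y; rewrite andbF.
by under eq_bigr => y _ do rewrite andbT; rewrite big_seq_if_eq.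
Qed.

Lemma reroute_cost : gilbert_cost p reroute = gilbert_cost p F - \sum_(y <- J) c z y
  + (`|mJ| `^ p * edist zp z + \sum_(y <- J) `|m z y| `^ p * edist zp y).
Proof.
have uV := flow_uniq flowF.
have c'zp : c' zp zp = 0.
  by rewrite /edge_cost /= /reroute_fm eqxx reroute_out_zp normr0 powR0 ?gt_eqF ?mul0r.
have rows : \sum_(x <- fV F) \sum_(y <- zp :: fV F) c' x y = \sum_(x <- fV F) c' zp x
    + (\sum_(x <- fV F) \sum_(y <- fV F) c x y - 2 * \sum_(y <- J) c z y).
  rewrite big_seq (eq_bigr (fun x => c' zp x + (\sum_(y <- fV F) c x y
    - (if x == z then \sum_(y <- J) c x y else 0) - (if x \in J then c x z else 0))));
    last by move=> x xV; rewrite big_cons (edge_costC reroute_is_flow) reroute_cost_row.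
  rewrite -big_seq big_split /= !sumrB big_seq_if_eq// big_seq_if_in//; last exact: reroute_JV.
  have -> : \sum_(x <- J) c x z = \sum_(y <- J) c z y.
    by apply: eq_bigr => x _; exact: (edge_costC flowF p x z).
  lra.
rewrite !gilbert_costE /= big_cons big_cons c'zp add0r rows reroute_cost_out.
by field.
Qed.

End Rerouting.

Section FirstVariation.
Variables (R : realType) (d : nat) (p : R) (mup mum : point R d -> R) (F : flow R d).
Hypotheses (p_gt0 : 0 < p) (flowF : is_flow mup mum F).
Hypothesis optF : forall G, is_flow mup mum G -> gilbert_cost p F <= gilbert_cost p G.
Local Notation m := (fm F).

Definition edge_pull z y : point R d := (`|m z y| `^ p / edist z y) *: (y - z).

Variables (z : point R d) (J : seq (point R d)).
Hypotheses (zV : z \in fV F) (uJ : uniq J) (Jnbr : {in J, forall y, m z y != 0}).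

Lemma optimal_reroute_ge0 zp : zp \notin fV F ->
  0 <= `|\sum_(y <- J) m z y| `^ p * edist zp z
       + \sum_(y <- J) `|m z y| `^ p * (edist zp y - edist z y).
Proof.
move=> zpV; have := optF (reroute_is_flow flowF zV zpV uJ Jnbr).
rewrite (reroute_cost flowF zV zpV uJ Jnbr p_gt0) -subr_ge0.
have -> : \sum_(y <- J) `|m z y| `^ p * (edist zp y - edist z y) =
    \sum_(y <- J) `|m z y| `^ p * edist zp y - \sum_(y <- J) edge_cost F p z y.
  by rewrite -sumrB; apply: eq_bigr => y _; rewrite mulrBr.
lra.
Qed.

Lemma pull_first_order e v :
  \sum_(y <- J) `|m z y| `^ p * (edist (z + e *: v) y - edist z y)
  <= - e * dot (\sum_(y <- J) edge_pull z y) v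
     + e ^+ 2 * dot v v / 2 * \sum_(y <- J) `|m z y| `^ p / edist z y.
Proof.
rewrite dot_suml (mulr_sumr _ _ _ (- e)) (mulr_sumr _ _ _ (e ^+ 2 * dot v v / 2)).
rewrite -big_split /= !big_seq ler_sum// => y yJ.
have zy : z != y by apply: contraTneq (Jnbr yJ) => <-; rewrite (flow_diag flowF) eqxx.
have A_gt0 := edist_gt0 zy.
have -> : - e * dot (edge_pull z y) v + e ^+ 2 * dot v v / 2 * (`|m z y| `^ p / edist z y)
    = `|m z y| `^ p * (edist z y - e * dot (y - z) v / edist z y
                       + e ^+ 2 * dot v v / (2 * edist z y) - edist z y).
  by rewrite /edge_pull dotZl; field; rewrite gt_eqF.
by apply: ler_wpM2l; [exact: powR_ge0 | rewrite lerD2r edist_shift_le].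
Qed.

Theorem optimal_pull_le :
  enorm (\sum_(y <- J) edge_pull z y) <= `|\sum_(y <- J) m z y| `^ p.
Proof.
set W := \sum_(y <- J) _; set a := _ `^ p; rewrite leNgt; apply/negP => aW.
have W_gt0 : 0 < enorm W := le_lt_trans (powR_ge0 _ _) aW.
set v := (enorm W)^-1 *: W.
have vv : dot v v = 1.
  by rewrite /v dotZl dotZr -enorm_sqr; field; rewrite gt_eqF.
have Wv : dot W v = enorm W.
  by rewrite /v dotZr -enorm_sqr; field; rewrite gt_eqF.
set C := \sum_(y <- J) `|m z y| `^ p / edist z y.
have C_ge0 : 0 <= C.
  by rewrite /C big_seq sumr_ge0// => y _; rewrite divr_ge0 ?powR_ge0 ?edist_ge0.
have [m0 m0_gt0 m0_notin] := exists_pos_notin [seq dot (x - z) v | x <- fV F].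
(* [e] keeps the second-order term below the first-order gain and makes [z + e v] new. *)
set e := Num.min ((enorm W - a) / (C + 1)) m0 / 2.
have e_gt0 : 0 < e by rewrite divr_gt0// lt_min m0_gt0 divr_gt0 ?subr_gt0// ltr_pwDr.
have [e_lt_m0 eC] : e < m0 /\ e * C <= (enorm W - a) / 2.
  have C1_gt0 : 0 < C + 1 by lra.
  set D := (enorm W - a) / (C + 1).
  have DC : D * (C + 1) = enorm W - a by rewrite divfK ?gt_eqF.
  have [mD mm0] : Num.min D m0 <= D /\ Num.min D m0 <= m0 by rewrite !ge_min !lexx ?orbT.
  have : 0 < Num.min D m0 by rewrite lt_min m0_gt0 divr_gt0 ?subr_gt0// ltr_pwDr.
  by rewrite /e; split; nra.
set zp := z + e *: v; have zpz : zp - z = e *: v by rewrite /zp addrC addKr.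
have zpV : zp \notin fV F.
  apply: contraTN (m0_notin e e_gt0 e_lt_m0) => zpV; apply/negPn.
  by have := map_f (fun x => dot (x - z) v) zpV; rewrite /= zpz dotZl vv mulr1.
have := optimal_reroute_ge0 zpV.
rewrite edistE zpz enormZ /enorm vv sqrtr1 mulr1 (ger0_norm (ltW e_gt0)) -/a.
have := pull_first_order e v; rewrite -/W -/zp Wv vv -/C.
have := ler_wpM2l (ltW e_gt0) eC.
have : 0 < e * (enorm W - a) by rewrite mulr_gt0 ?subr_gt0.
lra.
Qed.

End FirstVariation.

Section BranchingPoint.
Variables (R : realType) (d : nat) (p : R) (mup mum : point R d -> R) (F : flow R d).
Hypotheses (p_gt0 : 0 < p) (flowF : is_flow mup mum F).
Hypothesis optF : forall G, is_flow mup mum G -> gilbert_cost p F <= gilbert_cost p G.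
Variable z : point R d.
Hypotheses (zV : z \in fV F) (kirchhoff_z : mup z = mum z).
Local Notation m := (fm F).
Local Notation pull := (edge_pull p F z).
Local Notation N := [seq w <- fV F | m z w != 0].

Lemma optimal_pull_sqr_le J : uniq J -> {in J, forall y, m z y != 0} ->
  dot (\sum_(y <- J) pull y) (\sum_(y <- J) pull y) <= `|\sum_(y <- J) m z y| `^ (p * 2).
Proof.
move=> uJ Jnbr; rewrite -enorm_sqr -powR_sqr// lerXn2r ?nnegrE ?sqrtr_ge0 ?powR_ge0//.
exact: (optimal_pull_le p_gt0 flowF optF zV uJ Jnbr).
Qed.

Theorem optimal_branching_balanced :
  balanced (p * 2) N (m z) (fun y y' => dot (pull y) (pull y')).
Proof.
have uN : uniq N := filter_uniq _ (flow_uniq flowF).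
have Nnbr : {in N, forall y, m z y != 0} by move=> y; rewrite mem_filter => /andP[].
have sumN : \sum_(y <- N) m z y = 0.
  rewrite big_filter big_mkcond (eq_bigr (m z)) => [|w _]; last by case: eqVneq => [->|].
  apply: oppr_inj; rewrite oppr0 -sumrN.
  under eq_bigr => w _ do rewrite -(flow_anti flowF).
  by rewrite -(flow_div flowF) kirchhoff_z subrr.
have pull_sum0 : \sum_(y <- N) pull y = 0.
  apply/eqP; rewrite -dotxx_eq0 eq_le dotxx_ge0 andbT.
  by have := optimal_pull_sqr_le uN Nnbr; rewrite sumN normr0 powR0 ?mulf_neq0 ?gt_eqF.
split=> // [y y'|y yN|y yN|y y' yN y'N yy'].
- exact: dotC.
- under eq_bigr => y' _ do rewrite dotC.
  by rewrite -dot_suml pull_sum0 dot0l.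
- have zy : z != y by apply: contraTneq (Nnbr y yN) => <-; rewrite (flow_diag flowF) eqxx.
  have A_gt0 := edist_gt0 zy.
  rewrite /edge_pull dotZl dotZr -enorm_sqr -edistE edistC -powR_sqr//.
  by field; rewrite edistC gt_eqF.
have uyy' : uniq [:: y; y'] by rewrite /= inE yy'.
have yy'nbr : {in [:: y; y'], forall w, m z w != 0}.
  by move=> w; rewrite !inE => /orP[]/eqP->; apply: Nnbr.
have := optimal_pull_sqr_le uyy' yy'nbr; rewrite !big_cons !big_nil !addr0.
by rewrite dotDl !dotDr (dotC (pull y')); lra.
Qed.

End BranchingPoint.

Theorem corollary1 (R : realType) (d : nat) (p : R) :
  (2 <= d)%N -> 0 < p -> p < 2^-1 ->
  forall (S : seq (point R d)) (mup mum : point R d -> R),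
    fin_measure_on S mup -> fin_measure_on S mum ->
    uniq S -> \sum_(x <- S) mup x = \sum_(x <- S) mum x ->
  forall F : flow R d, gilbert_steiner_solution p mup mum F ->
  forall z : point R d, branching_point mup mum F z ->
    vdeg F z != 0%N -> vdeg F z != 2%N -> vdeg F z = 3%N.
Proof.
move=> _ p_gt0 p_lt12 S mup mum _ _ _ _ F [flowF optF] z [zV [mup_z mum_z]].
have kirchhoff_z : mup z = mum z by rewrite mup_z mum_z.
have bal := optimal_branching_balanced p_gt0 flowF optF zV kirchhoff_z.
have q_gt0 : 0 < p * 2 by rewrite mulr_gt0.
have q_lt1 : p * 2 < 1 by lra.
have := balanced_size_le3 q_gt0 q_lt1 bal; have := balanced_size_neq1 bal.
rewrite /vdeg -size_filter.
by case: size => [|[|[|[|]]]].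
Qed.
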